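(* Let $m\ge2$ and $a_1\ge a_2\ge\cdots\ge a_m\ge1$ be integers, and set $a=\max(3,a_1)$. For $1\le i\le m$ let \[E_i=\big\{[(m-i)a]\cup\{(m-i+1)a+1,\dots,ma\}\cup\{j\} : (m-i)a+1\le j\le (m-i)a+a_i\big\},\] and let $H$ be the hypergraph on $[ma]$ with edge set $E=E_1\cup\cdots\cup E_m$. Then for $F,F'\in E$, the edge spheres $Q_F$ and $Q_{F'}$ lie in the same connected component of $\Delta_H$ if and only if $F,F'\in E_i$ for some $i$. Consequently $\Delta_H$ has exactly $m$ connected components, and for each $i$ one component is the union of the $a_i$ edge spheres $Q_F$, $F\in E_i$.
   Context: Here $[0]=\emptyset$. The coloring complex $\Delta_H$ of a hypergraph $H=([N],E)$ is the abstract simplicial complex whose vertices are the nonempty proper subsets of $[N]$ and whose faces are the chains $\emptyset\neq A_1\subsetneq\cdots\subsetneq A_l\neq[N]$ ($l\ge0$) such that, with $A_0=\emptyset$, $A_{l+1}=[N]$, some difference $A_i\setminus A_{i-1}$ contains an edge of $H$. For $F\in E$, the edge sphere $Q_F$ is the subcomplex of those faces for which some difference $A_i\setminus A_{i-1}$ contains $F$. *)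

From HB Require Import structures.
From mathcomp Require Import all_boot.
Set Implicit Arguments. Unset Strict Implicit. Unset Printing Implicit Defensive.

(* Ground set [N] = {1,...,N} is represented by 'I_N, element x standing for x+1. *)
Section ColoringComplex.
Variable N : nat.
Variable E : {set {set 'I_N}}.

Definition is_chain (S : {set {set 'I_N}}) : bool :=
  [forall A in S, (A != set0) && (A != setT)] &&
  [forall A in S, forall B in S, (A \subset B) || (B \subset A)].

(* predecessor of A in the chain  emptyset = A_0 < A_1 < ... < A_l < A_{l+1} = [N] *)
Definition chain_pred (S : {set {set 'I_N}}) (A : {set 'I_N}) : {set 'I_N} :=
  \bigcup_(B in S | B \proper A) B.

Definition chain_diffs (S : {set {set 'I_N}}) : {set {set 'I_N}} :=
  [set A :\: chain_pred S A | A in S :|: [set setT]].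

Definition face (S : {set {set 'I_N}}) : bool :=
  is_chain S && [exists D in chain_diffs S, exists F in E, F \subset D].

Definition Qface (F : {set 'I_N}) (S : {set {set 'I_N}}) : bool :=
  is_chain S && [exists D in chain_diffs S, F \subset D].

Definition is_vertex (v : {set 'I_N}) : bool := face [set v].
Definition adj : rel {set 'I_N} := fun u v => face [set u; v].

Definition comp (v : {set 'I_N}) : {set {set 'I_N}} := [set w | connect adj v w].

(* the set of connected components of Delta_H (each given by its vertex set) *)
Definition components : {set {set {set 'I_N}}} :=
  [set comp v | v in [set v | is_vertex v]].

Definition same_component (F F' : {set 'I_N}) : Prop :=
  forall u v, Qface F [set u] -> Qface F' [set v] -> connect adj u v.

End ColoringComplex.

Definition abig (a : nat -> nat) : nat := maxn 3 (a 1).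

(* E_i, translated to 0-based indices:
   [(m-i)a] = {x | x < (m-i)a},  {(m-i+1)a+1..ma} = {x | (m-i+1)a <= x},
   j ranges over (m-i)a <= x < (m-i)a + a_i. *)
Definition Ei (m : nat) (a : nat -> nat) (i : nat) : {set {set 'I_(m * abig a)}} :=
  [set [set x : 'I_(m * abig a) | (x < (m - i) * abig a)
                                  || ((m - i).+1 * abig a <= x) || (x == j)]
  | j in [set j : 'I_(m * abig a) | ((m - i) * abig a <= j)
                                    && (j < (m - i) * abig a + a i)]].

Definition Hedges (m : nat) (a : nat -> nat) : {set {set 'I_(m * abig a)}} :=
  \bigcup_(1 <= i < m.+1) Ei m a i.

From Pilot Require Import Defs.
From HB Require Import structures.
From mathcomp Require Import all_boot zify.
Set Implicit Arguments. Unset Strict Implicit. Unset Printing Implicit Defensive.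

Section EdgeSpheres.
Variable N : nat.
Variable E : {set {set 'I_N}}.
Implicit Types (S : {set {set 'I_N}}) (A B F d u v w : {set 'I_N}) (x : 'I_N).

Lemma chain_predP S A x :
  reflect (exists2 B, B \in S & B \proper A /\ x \in B) (x \in chain_pred S A).
Proof.
apply: (iffP bigcupP) => [[B /andP[BS BA] xB]|[B BS [BA xB]]]; first by exists B.
by exists B; rewrite ?BS ?BA.
Qed.

Lemma chain_diff_witness S A F : A \in S :|: [set setT] -> F \subset A ->
  (forall B x, B \in S -> B \proper A -> x \in F -> x \notin B) ->
  [exists D in chain_diffs S, F \subset D].
Proof.
move=> AS FA avoid; apply/existsP; exists (A :\: chain_pred S A).
apply/andP; split; first exact: imset_f.
apply/subsetP => x xF; rewrite inE (subsetP FA x xF) andbT.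
by apply/chain_predP => -[B BS [BA xB]]; move: (avoid B x BS BA xF); rewrite xB.
Qed.

Lemma is_chainP S : is_chain S ->
  (forall A, A \in S -> A != set0 /\ A != setT) /\
  (forall A B, A \in S -> B \in S -> (A \subset B) || (B \subset A)).
Proof.
case/andP => /forallP proper_mem /forallP comparable; split.
  by move=> A AS; move: (proper_mem A); rewrite AS => /andP[-> ->].
by move=> A B AS BS; move: (comparable A); rewrite AS /= => /forallP /(_ B); rewrite BS.
Qed.

Lemma Qface_vertex F v : Qface F [set v] =
  [&& v != set0, v != setT & (F \subset v) || (F \subset ~: v)].
Proof.
apply/idP/idP.
- case/andP => /is_chainP[proper_mem _] /existsP[_ /andP[/imsetP[A AS ->] FD]].
  have [v0 vT] := proper_mem v (set11 v); rewrite v0 vT; move: AS FD; rewrite !inE.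
  case/orP => /eqP -> FD; first by rewrite (subset_trans FD (subsetDl _ _)).
  apply/orP; right; apply/subsetP => x xF; rewrite inE.
  have /setDP[_ xNpred] := subsetP FD x xF.
  apply: contra xNpred => xv; apply/chain_predP; exists v; rewrite ?inE //.
  by rewrite properT vT.
- case/and3P => v0 vT Fv; apply/andP; split.
    apply/andP; split; apply/forallP => A; apply/implyP; rewrite inE => /eqP->.
      by rewrite v0 vT.
    by apply/forallP => B; apply/implyP; rewrite inE => /eqP->; rewrite subxx.
  case/orP: Fv => Fv.
    apply: (chain_diff_witness (A := v)); rewrite ?inE ?eqxx //.
    by move=> B x; rewrite inE => /eqP->; rewrite properxx.
  apply: (chain_diff_witness (A := setT)); rewrite ?inE ?eqxx ?orbT ?subsetT //.
  by move=> B x; rewrite inE => /eqP-> _ /(subsetP Fv); rewrite inE.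
Qed.

Lemma Qface_vertex_of_face F S v : Qface F S -> v \in S -> Qface F [set v].
Proof.
case/andP => /is_chainP[proper_mem comparable] /existsP[_ /andP[/imsetP[A AS ->] FD]] vS.
have [v0 vT] := proper_mem v vS.
have FA : F \subset A := subset_trans FD (subsetDl _ _).
rewrite Qface_vertex v0 vT /=; have [Av|nAv] := boolP (A \subset v).
  by rewrite (subset_trans FA Av).
have vA : v \proper A.
  move: AS; rewrite !inE => /orP[AS|/eqP ->]; last by rewrite properT.
  by rewrite properE nAv andbT; move: (comparable A v AS vS); rewrite (negbTE nAv).
apply/orP; right; apply/subsetP => x xF; rewrite inE.
have /setDP[_ xNpred] := subsetP FD x xF.
by apply: contra xNpred => xv; apply/chain_predP; exists v.
Qed.

Lemma face_sphere S : face E S -> exists2 F, F \in E & Qface F S.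
Proof.
case/andP => chS /existsP[D /andP[DS /existsP[F /andP[FE FD]]]].
by exists F; rewrite // /Qface chS; apply/existsP; exists D; rewrite DS.
Qed.

Lemma sphere_face F S : F \in E -> Qface F S -> face E S.
Proof.
move=> FE /andP[chS /existsP[D /andP[DS FD]]]; rewrite /face chS.
by apply/existsP; exists D; rewrite DS; apply/existsP; exists F; rewrite FE.
Qed.

Lemma adj_sym : symmetric (adj E).
Proof. by move=> u v; rewrite /adj setUC. Qed.

Lemma adj_connect_sym : connect_sym (adj E).
Proof. exact: sym_connect_sym adj_sym. Qed.

Lemma adj_sphere u v : adj E u v ->
  exists2 F, F \in E & Qface F [set u] /\ Qface F [set v].
Proof.
case/face_sphere => F FE QF; exists F => //.
by split; apply: Qface_vertex_of_face QF _; rewrite !inE eqxx ?orbT.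
Qed.

Lemma adj_chain2 F u v : F \in E -> u \proper v -> u != set0 -> v != setT ->
  [|| F \subset u, F \subset v :\: u | F \subset ~: v] -> adj E u v.
Proof.
move=> FE uv u0 vT Fdiff.
have uT : u != setT by apply: contraTneq uv => ->; rewrite properE subsetT andbF.
have v0 : v != set0 by apply: contraTneq uv => ->; rewrite properE sub0set andbF.
have vu : ~~ (v \proper u) by rewrite properE (proper_sub uv) andbF.
apply: (@sphere_face F) => //; apply/andP; split.
  apply/andP; split; apply/forallP => B; apply/implyP; rewrite !inE => /orP[]/eqP->;
    rewrite ?u0 ?uT ?v0 ?vT //; apply/forallP => C; apply/implyP;
    rewrite !inE => /orP[]/eqP->; rewrite ?subxx ?(proper_sub uv) ?orbT //.
case/or3P: Fdiff => Fdiff.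
- apply: (chain_diff_witness (A := u)); rewrite ?inE ?eqxx //.
  by move=> B x; rewrite !inE => /orP[]/eqP->; rewrite ?properxx ?(negbTE vu).
- apply: (chain_diff_witness (A := v)); rewrite ?inE ?eqxx ?orbT //.
    exact: subset_trans Fdiff (subsetDl _ _).
  move=> B x; rewrite !inE => /orP[]/eqP->; rewrite ?properxx // => _ /(subsetP Fdiff).
  by case/setDP.
- apply: (chain_diff_witness (A := setT)); rewrite ?inE ?eqxx ?orbT ?subsetT //.
  move=> B x; rewrite !inE => /orP[]/eqP-> _ /(subsetP Fdiff); rewrite inE //.
  by apply: contra => /(subsetP (proper_sub uv)).
Qed.

Section OneEdge.
Variable F : {set 'I_N}.
Hypotheses (FE : F \in E) (F0 : F != set0).

Lemma connect_superset w : F \subset w -> w != setT -> connect (adj E) F w.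
Proof.
move=> Fw wT; have [->|nFw] := eqVneq F w; first exact: connect0.
by apply/connect1/(adj_chain2 FE) => //; rewrite ?properEneq ?nFw ?Fw ?subxx.
Qed.

(* A nonempty set d strictly inside ~: F reaches F through the vertex d :|: F. *)
Lemma connect_disjoint d : d \subset ~: F -> d != ~: F -> d != set0 ->
  connect (adj E) F d.
Proof.
move=> dF dnF d0.
have dNF x : x \in d -> x \notin F by move/(subsetP dF); rewrite inE.
have dFT : d :|: F != setT.
  apply: contra dnF => /eqP dFT; rewrite eqEsubset dF /=; apply/subsetP => x.
  rewrite inE => xNF; have : x \in d :|: F by rewrite dFT inE.
  by rewrite inE (negbTE xNF) orbF.
apply: connect_trans (connect_superset (subsetUr d F) dFT) _.
rewrite adj_connect_sym; apply/connect1/(adj_chain2 FE) => //.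
  rewrite properEneq subsetUl andbT; apply: contra F0 => /eqP dFd.
  apply/set0Pn => -[x xF]; have : x \in d by rewrite dFd inE xF orbT.
  by move/dNF; rewrite xF.
apply/or3P/Or32; apply/subsetP => x xF; rewrite !inE xF orbT andbT.
by apply: contraL xF; apply: dNF.
Qed.

Lemma sphere_connected v : 1 < #|~: F| -> Qface F [set v] -> connect (adj E) F v.
Proof.
move=> cardC; rewrite Qface_vertex => /and3P[v0 vT /orP[Fv|FvC]].
  exact: connect_superset.
have vC : v \subset ~: F.
  by apply/subsetP => x xv; rewrite inE; apply: contraL xv => /(subsetP FvC); rewrite inE.
have [vnC|] := boolP (v != ~: F); first exact: connect_disjoint.
rewrite negbK => /eqP ->.
have [k kC] : exists k, k \in ~: F by apply/set0Pn; rewrite -card_gt0 ltnW.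
have kC_sub : [set k] \subset ~: F by rewrite sub1set.
have kCn : [set k] != ~: F by apply: contraTneq cardC => <-; rewrite cards1.
have k0 : [set k] != set0 by apply/set0Pn; exists k; rewrite inE.
have CT : ~: F != setT by rewrite -setC0 (inj_eq (@setC_inj _)).
apply: connect_trans (connect_disjoint kC_sub kCn k0) (connect1 _).
by apply: (adj_chain2 FE) => //; rewrite ?properEneq ?kCn // setCK subxx !orbT.
Qed.

End OneEdge.

Lemma edge_in_own_sphere F : F != set0 -> F != setT -> Qface F [set F].
Proof. by move=> F0 FT; rewrite Qface_vertex F0 FT subxx. Qed.

Lemma spheres_disjoint F (F' : {set 'I_N}) v : F :|: F' = setT -> F :&: F' != set0 ->
  Qface F [set v] -> Qface F' [set v] -> False.
Proof.
move=> cover /set0Pn[y /setIP[yF yF']].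
rewrite !Qface_vertex => /and3P[/set0Pn[z zv] vT Fv] /and3P[_ _ F'v].
have [Fsub|FsubC] := orP Fv; have [F'sub|F'subC] := orP F'v.
- by move/negP: vT; apply; rewrite eqEsubset subsetT -cover subUset Fsub F'sub.
- by move: (subsetP Fsub y yF) (subsetP F'subC y yF'); rewrite inE => ->.
- by move: (subsetP FsubC y yF) (subsetP F'sub y yF'); rewrite inE => /negbTE->.
- have : z \in F :|: F' by rewrite cover inE.
  by case/setUP => [/(subsetP FsubC)|/(subsetP F'subC)]; rewrite inE zv.
Qed.

Lemma singleton_in_sphere F x : F != set0 -> x \notin F -> Qface F [set [set x]].
Proof.
case/set0Pn=> y yF xNF; rewrite Qface_vertex; apply/and3P; split.
- by apply/set0Pn; exists x; rewrite inE.
- apply: contraNneq xNF => xT; have : y \in [set x] by rewrite xT inE.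
  by rewrite inE => /eqP <-.
- by apply/orP; right; apply/subsetP => z zF; rewrite !inE; apply: contraNneq xNF => <-.
Qed.

End EdgeSpheres.

Section ClassDecomposition.
Variables (N m : nat) (cls : nat -> {set {set 'I_N}}).
Implicit Types (S : {set {set 'I_N}}) (F u v w : {set 'I_N}).

Local Notation E := (\bigcup_(1 <= i < m.+1) cls i).

Hypothesis cls_inhabited : forall i, 1 <= i <= m -> exists F, F \in cls i.
Hypothesis cls_thick : forall i F, 1 <= i <= m -> F \in cls i ->
  F != set0 /\ 1 < #|~: F|.
Hypothesis cls_near : forall i F F', 1 <= i <= m -> F \in cls i -> F' \in cls i ->
  exists x, (x \notin F) && (x \notin F').
Hypothesis cls_apart : forall i i' F F', 1 <= i <= m -> 1 <= i' <= m -> i != i' ->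
  F \in cls i -> F' \in cls i' -> F :|: F' = setT /\ F :&: F' != set0.

Lemma mem_edges F : reflect (exists2 i, 1 <= i <= m & F \in cls i) (F \in E).
Proof.
have -> : (F \in E) = has (fun i => F \in cls i) (index_iota 1 m.+1).
  by elim: (index_iota 1 m.+1) => [|k r IH]; rewrite ?big_nil ?big_cons inE ?IH.
apply: (iffP hasP) => [[i]|[i hi FE]]; first by rewrite mem_index_iota ltnS; exists i.
by exists i; rewrite ?mem_index_iota ?ltnS.
Qed.

Lemma cls_edge i F : 1 <= i <= m -> F \in cls i -> F \in E.
Proof. by move=> hi FE; apply/mem_edges; exists i. Qed.

Definition in_class i v : bool := [exists F in cls i, Qface F [set v]].

Lemma cls_own_sphere i F : 1 <= i <= m -> F \in cls i -> Qface F [set F].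
Proof.
move=> hi FE; have [F0 cardC] := cls_thick hi FE; apply: edge_in_own_sphere F0 _.
by apply: contraTneq cardC => ->; rewrite setCT cards0.
Qed.

Lemma edge_in_class i F : 1 <= i <= m -> F \in cls i -> in_class i F.
Proof. by move=> hi FE; apply/existsP; exists F; rewrite FE (cls_own_sphere hi FE). Qed.

Lemma in_class_unique i i' v : 1 <= i <= m -> 1 <= i' <= m ->
  in_class i v -> in_class i' v -> i = i'.
Proof.
move=> hi hi' /existsP[F /andP[FE QF]] /existsP[F' /andP[FE' QF']].
case: (eqVneq i i') => // ne; have [cover meet] := cls_apart hi hi' ne FE FE'.
by case: (spheres_disjoint cover meet QF QF').
Qed.

Lemma class_sphere_connected i F v : 1 <= i <= m -> F \in cls i ->
  Qface F [set v] -> connect (adj E) F v.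
Proof.
move=> hi FE QF; have [F0 cardC] := cls_thick hi FE.
exact: (sphere_connected (cls_edge hi FE) F0 cardC QF).
Qed.

(* Spheres of one class all lie in a single connected component: two
   edges of a class miss a common point x, and {x} is in both spheres. *)
Lemma in_class_connected i u v : 1 <= i <= m -> in_class i u -> in_class i v ->
  connect (adj E) u v.
Proof.
move=> hi /existsP[F /andP[FE Qu]] /existsP[F' /andP[FE' Qv]].
have [x /andP[xNF xNF']] := cls_near hi FE FE'.
have QX := singleton_in_sphere (proj1 (cls_thick hi FE)) xNF.
have QX' := singleton_in_sphere (proj1 (cls_thick hi FE')) xNF'.
have uF : connect (adj E) u F.
  by rewrite adj_connect_sym; apply: class_sphere_connected hi FE Qu.
have XF' : connect (adj E) [set x] F'.
  by rewrite adj_connect_sym; apply: class_sphere_connected hi FE' QX'.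
apply: connect_trans uF (connect_trans (class_sphere_connected hi FE QX) _).
exact: connect_trans XF' (class_sphere_connected hi FE' Qv).
Qed.

Lemma in_class_connect i u v : 1 <= i <= m -> connect (adj E) u v ->
  in_class i u -> in_class i v.
Proof.
move=> hi /connectP[p]; elim: p u => [|w p IH] u /= path_uw; first by move=> -> .
case/andP: path_uw => /adj_sphere[F FE [Qu Qw]] pw end_v cu.
apply: IH pw end_v _; have /mem_edges[i' hi' FE'] := FE.
have cu' : in_class i' u by apply/existsP; exists F; rewrite FE' Qu.
rewrite -(in_class_unique hi' hi cu' cu).
by apply/existsP; exists F; rewrite FE' Qw.
Qed.

Definition class_rep (i : nat) : {set 'I_N} := odflt set0 [pick F in cls i].
Definition class_comp (i : nat) : {set {set 'I_N}} := Defs.comp E (class_rep i).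

Lemma class_rep_in i : 1 <= i <= m -> class_rep i \in cls i.
Proof.
move=> hi; rewrite /class_rep; case: pickP => [F -> //|none].
by have [F FE] := cls_inhabited hi; rewrite none in FE.
Qed.

Lemma mem_class_comp i v : 1 <= i <= m -> (v \in class_comp i) = in_class i v.
Proof.
move=> hi; have rep_cls := edge_in_class hi (class_rep_in hi).
rewrite inE; apply/idP/idP => [|cv]; first by move/in_class_connect; apply.
exact: in_class_connected rep_cls cv.
Qed.

Lemma comp_in_class i v : 1 <= i <= m -> in_class i v -> Defs.comp E v = class_comp i.
Proof.
move=> hi cv; apply/setP => w; rewrite mem_class_comp // inE.
apply/idP/idP => [vw|]; first exact: in_class_connect vw cv.
exact: in_class_connected.
Qed.

Lemma class_comp_inj i i' : 1 <= i <= m -> 1 <= i' <= m ->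
  class_comp i = class_comp i' -> i = i'.
Proof.
move=> hi hi' same; have := edge_in_class hi' (class_rep_in hi').
rewrite -mem_class_comp // -same mem_class_comp //.
by move/in_class_unique; apply; rewrite // edge_in_class ?class_rep_in.
Qed.

Lemma components_classes :
  components E = [set class_comp i.+1 | i : 'I_m].
Proof.
apply/setP => C; apply/imsetP/imsetP => [[v]|[k _ ->]].
  rewrite inE /is_vertex => /face_sphere[F /mem_edges[i hi FE] Qv] ->.
  have hk : i.-1 < m by lia.
  have cv : in_class i v by apply/existsP; exists F; rewrite FE.
  exists (Ordinal hk) => //=; have -> : i.-1.+1 = i by lia.
  exact: comp_in_class hi cv.
have hk : 1 <= k.+1 <= m by rewrite ltn_ord.
exists (class_rep k.+1) => //; rewrite inE /is_vertex.
exact: sphere_face (cls_edge hk (class_rep_in hk)) (cls_own_sphere hk (class_rep_in hk)).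
Qed.

Lemma same_component_classes F F' : F \in E -> F' \in E ->
  same_component E F F' <-> exists i, [/\ 1 <= i <= m, F \in cls i & F' \in cls i].
Proof.
move=> /mem_edges[i hi FE] /mem_edges[i' hi' FE'].
split=> [same | [k [hk Fk F'k]] u v Qu Qv].
  have FF' := same F F' (cls_own_sphere hi FE) (cls_own_sphere hi' FE').
  have cF' := in_class_connect hi FF' (edge_in_class hi FE).
  have ii' := in_class_unique hi hi' cF' (edge_in_class hi' FE').
  by exists i; rewrite FE ii'.
by apply: (in_class_connected hk); apply/existsP; [exists F | exists F']; apply/andP.
Qed.

Lemma card_components : #|components E| = m.
Proof.
rewrite components_classes card_imset ?card_ord // => k k' same.
by apply/val_inj/succn_inj; apply: class_comp_inj same; rewrite ltn_ord.
Qed.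

Lemma class_comp_faces i S : 1 <= i <= m -> S != set0 ->
  (face E S && (S \subset class_comp i)) = [exists F in cls i, Qface F S].
Proof.
move=> hi /set0Pn[v vS]; apply/idP/existsP => [/andP[] | [F /andP[FE QS]]].
  case/face_sphere => F /mem_edges[i' hi' FE] QS /subsetP/(_ v vS).
  have cv' : in_class i' v by apply/existsP; exists F; rewrite FE (Qface_vertex_of_face QS vS).
  rewrite mem_class_comp // => cv.
  by exists F; rewrite (in_class_unique hi hi' cv cv') FE.
rewrite (sphere_face (cls_edge hi FE) QS); apply/subsetP => w wS.
by rewrite mem_class_comp //; apply/existsP; exists F; rewrite FE (Qface_vertex_of_face QS wS).
Qed.

End ClassDecomposition.

Lemma avoid_two (b j j' : nat) : exists2 t, t < 3 & (b + t != j) && (b + t != j').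
Proof.
have [h0|h0] := boolP ((b != j) && (b != j')); first by exists 0; rewrite ?addn0.
have [h1|h1] := boolP ((b + 1 != j) && (b + 1 != j')); first by exists 1.
by exists 2 => //; lia.
Qed.

Section TheHypergraph.
Variables (m : nat) (a : nat -> nat).
Hypothesis a_nonincr : forall i, 1 <= i < m -> a i.+1 <= a i.
Hypothesis a_pos : forall i, 1 <= i <= m -> 1 <= a i.

Local Notation A := (abig a).
Local Notation N := (m * abig a).

(* a = max(3, a_1) bounds every a_i and leaves room for three points. *)
Lemma abig_ge3 : 3 <= A.
Proof. exact: leq_maxl. Qed.

Lemma a_le_abig i : 1 <= i <= m -> a i <= A.
Proof.
case: i => // k; elim: k => [|k IH] hk; first exact: leq_maxr.
apply: leq_trans (a_nonincr _) (IH _); lia.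
Qed.

(* Class i lives on the block [(m-i)A, (m-i)A + A) of [N]; these blocks are
   pairwise disjoint. *)
Lemma block_fits i : 1 <= i <= m -> (m - i) * A + A <= N.
Proof. by move=> hi; rewrite addnC -mulSn leq_mul //; lia. Qed.

Lemma blocks_disjoint i i' : 1 <= i <= m -> 1 <= i' <= m -> i != i' ->
  ((m - i) * A + A <= (m - i') * A) || ((m - i') * A + A <= (m - i) * A).
Proof.
move=> hi hi' ne; rewrite !(addnC _ A) -!mulSn !leq_mul2r.
by apply/orP; case: (ltngtP (m - i) (m - i')) => //; lia.
Qed.

Lemma Ei_shape F i : 1 <= i <= m -> F \in Ei m a i ->
  exists j : 'I_N, [/\ (m - i) * A <= j < (m - i) * A + A &
     forall x : 'I_N, (x \in F) =
       [|| x < (m - i) * A, (m - i) * A + A <= x | val x == val j]].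
Proof.
move=> hi /imsetP[j]; rewrite inE => /andP[j1 j2] ->; exists j; split.
  by rewrite j1 /=; apply: leq_trans j2 _; rewrite leq_add2l a_le_abig.
by move=> x; rewrite inE mulSn [A + _]addnC -orbA val_eqE.
Qed.

Lemma Ei_inhabited i : 1 <= i <= m -> exists F, F \in Ei m a i.
Proof.
move=> hi; have A3 := abig_ge3; have fits := block_fits hi.
have lt_j : (m - i) * A < N by lia.
eexists; apply/imsetP; exists (Ordinal lt_j) => //.
by rewrite inE /= leqnn /= -[X in X < _]addn0 ltn_add2l a_pos.
Qed.

Lemma Ei_miss i F y : 1 <= i <= m -> F \in Ei m a i ->
  exists2 x : 'I_N, x \notin F & val x != y.
Proof.
move=> hi FE; have [j [/andP[j1 j2] memF]] := Ei_shape hi FE.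
have [t t3 /andP[tj ty]] := avoid_two ((m - i) * A) j y.
have A3 := abig_ge3; have fits := block_fits hi.
have lt_x : (m - i) * A + t < N by lia.
by exists (Ordinal lt_x); rewrite ?memF /=; lia.
Qed.

Lemma Ei_thick i F : 1 <= i <= m -> F \in Ei m a i -> F != set0 /\ 1 < #|~: F|.
Proof.
move=> hi FE; split.
  have [j [_ memF]] := Ei_shape hi FE.
  by apply/set0Pn; exists j; rewrite memF eqxx !orbT.
have [x xNF _] := Ei_miss 0 hi FE; have [y yNF yx] := Ei_miss x hi FE.
have : [set x; y] \subset ~: F by rewrite subUset !sub1set !inE xNF yNF.
move/subset_leq_card; apply: leq_trans.
by rewrite cards2 eq_sym -(inj_eq val_inj) yx.
Qed.

Lemma Ei_near i F F' : 1 <= i <= m -> F \in Ei m a i -> F' \in Ei m a i ->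
  exists x, (x \notin F) && (x \notin F').
Proof.
move=> hi FE FE'.
have [j [/andP[j1 j2] memF]] := Ei_shape hi FE.
have [j' [/andP[j1' j2'] memF']] := Ei_shape hi FE'.
have [t t3 /andP[tj tj']] := avoid_two ((m - i) * A) j j'.
have A3 := abig_ge3; have fits := block_fits hi.
have lt_x : (m - i) * A + t < N by lia.
by exists (Ordinal lt_x); rewrite memF memF' /=; lia.
Qed.

Lemma Ei_apart i i' F F' : 1 <= i <= m -> 1 <= i' <= m -> i != i' ->
  F \in Ei m a i -> F' \in Ei m a i' -> F :|: F' = setT /\ F :&: F' != set0.
Proof.
move=> hi hi' ne FE FE'.
have [j [/andP[j1 j2] memF]] := Ei_shape hi FE.
have [j' [/andP[j1' j2'] memF']] := Ei_shape hi' FE'.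
have disj := blocks_disjoint hi hi' ne; split.
  by apply/setP => x; rewrite !inE memF memF'; lia.
by apply/set0Pn; exists j; rewrite inE memF memF'; lia.
Qed.

End TheHypergraph.

Theorem mainTheorem15 (m : nat) (a : nat -> nat) :
  2 <= m ->
  (forall i, 1 <= i < m -> a i.+1 <= a i) ->
  (forall i, 1 <= i <= m -> 1 <= a i) ->
  (forall F F', F \in Hedges m a -> F' \in Hedges m a ->
     (same_component (Hedges m a) F F' <->
      exists i, [/\ 1 <= i <= m, F \in Ei m a i & F' \in Ei m a i])) /\
  #|components (Hedges m a)| = m /\
  (forall i, 1 <= i <= m ->
     exists2 C, C \in components (Hedges m a) &
       forall S : {set {set 'I_(m * abig a)}}, S != set0 ->
         (face (Hedges m a) S && (S \subset C)) =
         [exists F in Ei m a i, Qface F S]).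
Proof.
move=> _ a_nonincr a_pos.
have inhabited := Ei_inhabited a_pos.
have thick := Ei_thick a_nonincr; have near := Ei_near a_nonincr.
have apart := Ei_apart a_nonincr.
split; first exact: same_component_classes thick near apart.
split; first exact: card_components inhabited thick near apart.
move=> i hi; exists (class_comp m (Ei m a) i); last by move=> S; apply: class_comp_faces.
rewrite (components_classes inhabited thick near apart); apply/imsetP.
have hk : i.-1 < m by lia.
by exists (Ordinal hk); rewrite //= prednK //; case/andP: hi.
Qed.
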